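(* Let $0<\alpha<\beta$ and $0<c<\alpha$ be real constants and define $f(a,b)=\dfrac{a^2+b^2-c^2}{2ab}$ for $a,b\in[\alpha,\beta]$. Then \[\max_{a,b\in[\alpha,\beta]} f(a,b)=\max\left\{\frac{\alpha^2+\beta^2-c^2}{2\alpha\beta},\ 1-\frac{c^2}{2\beta^2}\right\}.\] *)

From Stdlib Require Import Reals.
Open Scope R_scope.

Definition f62 (c a b : R) : R := (a ^ 2 + b ^ 2 - c ^ 2) / (2 * a * b).

Definition is_max_on_square (g : R -> R -> R) (alpha beta M : R) : Prop :=
  (exists a b, alpha <= a <= beta /\ alpha <= b <= beta /\ g a b = M) /\
  (forall a b, alpha <= a <= beta -> alpha <= b <= beta -> g a b <= M).

(** For fixed [b], [a |-> f(a,b) = a/(2b) + ((b^2 - c^2)/(2b))/a] is a linear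
    function plus a nonnegative multiple of [1/a]; since [1/a] lies below its
    chords, [f(.,b)] lies below an affine function agreeing with it at [alpha]
    and [beta], so its maximum on [[alpha,beta]] is attained at an endpoint.
    By the symmetry [f(a,b) = f(b,a)] the maximum on the square is attained at
    a corner, and the diagonal corner [f(alpha,alpha) = 1 - c^2/(2 alpha^2)] is
    dominated by [f(beta,beta) = 1 - c^2/(2 beta^2)]. *)

From Stdlib Require Import Reals Lra Psatz.
Open Scope R_scope.

Lemma affine_le_Rmax_endpoints (m k lo hi x : R) :
  lo <= x <= hi -> m * x + k <= Rmax (m * lo + k) (m * hi + k).
Proof.
  intros Hx.
  destruct (Rle_dec 0 m) as [Hm | Hm].
  - apply Rle_trans with (m * hi + k); [nra | apply Rmax_r].
  - apply Rle_trans with (m * lo + k); [nra | apply Rmax_l].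
Qed.

Lemma inv_le_chord (lo hi x : R) :
  0 < lo -> lo <= x <= hi -> / x <= / lo + / hi - x / (lo * hi).
Proof.
  intros Hlo Hx.
  assert (Hgap : / lo + / hi - x / (lo * hi) - / x
                 = (x - lo) * (hi - x) / (x * lo * hi)) by (field; lra).
  assert (0 <= (x - lo) * (hi - x) / (x * lo * hi)).
  { apply Rle_mult_inv_pos; [nra |].
    repeat apply Rmult_lt_0_compat; lra. }
  lra.
Qed.

Lemma linear_plus_inv_le_Rmax_endpoints (p q lo hi x : R) :
  0 < lo -> 0 <= q -> lo <= x <= hi ->
  p * x + q / x <= Rmax (p * lo + q / lo) (p * hi + q / hi).
Proof.
  intros Hlo Hq Hx.
  assert (Hchord : q / x <= q * (/ lo + / hi - x / (lo * hi))).
  { apply Rmult_le_compat_l; [exact Hq | exact (inv_le_chord lo hi x Hlo Hx)]. }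
  set (m := p - q / (lo * hi)).
  set (k := q * (/ lo + / hi)).
  replace (p * lo + q / lo) with (m * lo + k) by (unfold m, k; field; lra).
  replace (p * hi + q / hi) with (m * hi + k) by (unfold m, k; field; lra).
  apply Rle_trans with (m * x + k).
  - apply Rle_trans with (p * x + q * (/ lo + / hi - x / (lo * hi))).
    + lra.
    + right; unfold m, k; field; lra.
  - exact (affine_le_Rmax_endpoints m k lo hi x Hx).
Qed.

Lemma f62_sym (c a b : R) : 0 < a -> 0 < b -> f62 c a b = f62 c b a.
Proof. intros; unfold f62; field; lra. Qed.

Lemma f62_diag (c a : R) : 0 < a -> f62 c a a = 1 - c ^ 2 / (2 * a ^ 2).
Proof. intros; unfold f62; field; lra. Qed.

Lemma f62_diag_le (c a b : R) : 0 < a <= b -> f62 c a a <= f62 c b b.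
Proof.
  intros Hab.
  rewrite !f62_diag by lra.
  enough (c ^ 2 / (2 * b ^ 2) <= c ^ 2 / (2 * a ^ 2)) by lra.
  apply Rmult_le_compat_l; [nra |].
  apply Rinv_le_contravar; nra.
Qed.

Lemma f62_le_Rmax_endpoints (c lo hi a b : R) :
  0 < lo -> lo <= a <= hi -> 0 < b -> c ^ 2 <= b ^ 2 ->
  f62 c a b <= Rmax (f62 c lo b) (f62 c hi b).
Proof.
  intros Hlo Ha Hb Hcb.
  assert (Hlin : forall x, 0 < x ->
            f62 c x b = / (2 * b) * x + (b ^ 2 - c ^ 2) / (2 * b) / x).
  { intros x Hx; unfold f62; field; lra. }
  rewrite !Hlin by lra.
  apply linear_plus_inv_le_Rmax_endpoints; [lra | | lra].
  apply Rle_mult_inv_pos; lra.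
Qed.

Lemma f62_le_corners (c alpha beta a b : R) :
  0 < alpha -> c ^ 2 <= alpha ^ 2 ->
  alpha <= a <= beta -> alpha <= b <= beta ->
  f62 c a b <= Rmax (f62 c alpha beta) (f62 c beta beta).
Proof.
  intros Halpha Hc Ha Hb.
  set (M := Rmax _ _).
  assert (Hbeta_b : f62 c beta b <= M).
  { rewrite f62_sym by lra.
    exact (f62_le_Rmax_endpoints c alpha beta b beta Halpha Hb ltac:(lra) ltac:(nra)). }
  assert (Halpha_b : f62 c alpha b <= M).
  { rewrite f62_sym by lra.
    apply Rle_trans with (1 := f62_le_Rmax_endpoints c alpha beta b alpha
                                 Halpha Hb Halpha Hc).
    apply Rmax_lub.
    - apply Rle_trans with (f62 c beta beta);
        [apply f62_diag_le; lra | apply Rmax_r].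
    - rewrite f62_sym by lra. apply Rmax_l. }
  apply Rle_trans with (1 := f62_le_Rmax_endpoints c alpha beta a b
                               Halpha Ha ltac:(lra) ltac:(nra)).
  apply Rmax_lub; assumption.
Qed.

Theorem lemma6p2 (alpha beta c : R) (Hab : 0 < alpha < beta) (Hc : 0 < c < alpha) :
  is_max_on_square (f62 c) alpha beta
    (Rmax ((alpha ^ 2 + beta ^ 2 - c ^ 2) / (2 * alpha * beta))
          (1 - c ^ 2 / (2 * beta ^ 2))).
Proof.
  change ((alpha ^ 2 + beta ^ 2 - c ^ 2) / (2 * alpha * beta))
    with (f62 c alpha beta).
  rewrite <- f62_diag by lra.
  split.
  - apply Rmax_case; [exists alpha, beta | exists beta, beta]; repeat split; lra.
  - intros a b Ha Hb. apply f62_le_corners; nra.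
Qed.
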